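(* Let $I$ be a quasiconcave function satisfying $\int_0^t\frac{I(s)}{s}ds\lesssim I(t)$ for $t\in(0,1)$. Then $$(T_If)^{**}(t)\lesssim (T_If^{**})(t),\quad f\in\mathcal M_+(0,1),\ t\in(0,1).$$
   Context: A quasiconcave function is a nondecreasing bijection $I:(0,1)\to(0,1)$ with $I(0+)=0$, $I(1-)=1$ and $t\mapsto I(t)/t$ nonincreasing. $\mathcal M_+(0,1)$: nonnegative measurable functions; $f^*$: nonincreasing rearrangement; $f^{**}(t)=\frac1t\int_0^tf^*(s)ds$. $T_If(t)=\frac{I(t)}{t}\sup_{t\le s<1}\frac{s}{I(s)}f^*(s)$. $\lesssim$: up to a constant independent of $f,t$. *)

From HB Require Import structures.
From mathcomp Require Import all_boot all_order all_algebra.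
From mathcomp Require Import all_classical all_reals all_analysis.
From mathcomp Require Import measurable_realfun.
Set Implicit Arguments. Unset Strict Implicit. Unset Printing Implicit Defensive.
Import Order.TTheory GRing.Theory Num.Theory.
Import numFieldNormedType.Exports.
Local Open Scope classical_set_scope.
Local Open Scope ring_scope.
Local Open Scope ereal_scope.

Section Defs.
Variable R : realType.

Definition quasiconcave (I : R -> R) : Prop :=
  (forall x : R, (0 < x < 1)%R -> (0 < I x < 1)%R) /\
      (forall x y : R, (0 < x < 1)%R -> (0 < y < 1)%R -> I x = I y -> x = y) /\
      (forall y : R, (0 < y < 1)%R -> exists2 x : R, (0 < x < 1)%R & I x = y) /\
      (forall x y : R, (0 < x < 1)%R -> (0 < y < 1)%R -> (x <= y)%R -> (I x <= I y)%R) /\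
      (I x @[x --> (0%R : R)^'+] --> (0%R : R)) /\
      (I x @[x --> (1%R : R)^'-] --> (1%R : R)) /\
      (forall x y : R, (0 < x < 1)%R -> (0 < y < 1)%R -> (x <= y)%R ->
          (I y / y <= I x / x)%R).

Definition distrib (f : R -> \bar R) (s : R) : \bar R :=
  (@lebesgue_measure R) (`]0%R, 1%R[ `&` [set x | s%:E < f x]).

Definition rearr (f : R -> \bar R) (t : R) : \bar R :=
  ereal_inf [set s%:E | s in [set s : R | (0 <= s)%R /\ distrib f s <= t%:E]].

(* f^**(t) = (1/t) \int_0^t f^*(s) ds *)
Definition maxfun (f : R -> \bar R) (t : R) : \bar R :=
  (t^-1)%:E * \int[@lebesgue_measure R]_(s in `]0%R, t[) rearr f s.

Definition TI (I : R -> R) (f : R -> \bar R) (t : R) : \bar R :=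
  (I t / t)%:E *
  ereal_sup [set (s / I s)%:E * rearr f s | s in `[t, 1%R[].

End Defs.

(* Since T_I f is nonincreasing, (T_I f)^* <= T_I f, so it suffices to bound
   the average of T_I f over ]0, t[.  For u < t split the supremum defining
   T_I f(u) at t.  The part over [t, 1[ is I(u)/u times the supremum at t, and
   integrating I(u)/u over ]0, t[ costs C I(t) by hypothesis.  The part over
   [u, t[ is bounded block by block on the dyadic intervals
   [t_(j+1), t_j[, t_j = t 2^-j, by t_j f^*(t_(j+1)) / I(t_(j+1)), counted
   for u < t_j only; integrating I(u)/u over ]0, t_j[ and using
   I(2s) <= 2 I(s), the j-th block costs at most 8C times the integral of f^*
   over [t_(j+2), t_(j+1)[, and these intervals are disjoint.  Finally f^*
   is at most f^**, which is at most twice its own rearrangement; this turns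
   both parts into multiples of T_I f^**(t). *)

From HB Require Import structures.
From mathcomp Require Import all_boot all_order all_algebra.
From mathcomp Require Import all_classical all_reals all_analysis.
From mathcomp Require Import measurable_realfun.
From mathcomp Require Import ring lra.
Set Implicit Arguments. Unset Strict Implicit. Unset Printing Implicit Defensive.
Import Order.TTheory GRing.Theory Num.Theory.
Import numFieldNormedType.Exports.
Local Open Scope classical_set_scope.
Local Open Scope ring_scope.
Local Open Scope ereal_scope.

Section integral_bounds.
Context d (T : measurableType d) (R : realType) (mu : {measure set T -> \bar R}).
Variables (D : set T) (F : T -> \bar R).
Hypotheses (mD : measurable D) (mF : measurable_fun D F).

Lemma integral_ge_lb (c : \bar R) : 0 <= c -> (forall x, D x -> c <= F x) ->
  c * mu D <= \int[mu]_(x in D) F x.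
Proof.
move=> c0 cF; rewrite -integral_cst //.
by apply: ge0_le_integral => //; exact: measurable_cst.
Qed.

Lemma integral_le_ub (c : \bar R) : (forall x, D x -> 0 <= F x) ->
  (forall x, D x -> F x <= c) -> \int[mu]_(x in D) F x <= c * mu D.
Proof.
move=> F0 Fc; rewrite -integral_cst //.
by apply: ge0_le_integral => //; exact: measurable_cst.
Qed.

End integral_bounds.

Section lebesgue_measure_real_line.
Variable R : realType.
Local Notation mu := (@lebesgue_measure R).

Lemma lebesgue_measure_itv_le (x y : bool) (a b : R) : (a <= b)%R ->
  mu [set` Interval (BSide x a) (BSide y b)] = (b - a)%:E.
Proof.
rewrite lebesgue_measure_itv /= le_eqVlt => /predU1P[->|ab].
  by case: ifP; rewrite -?EFinB subrr.
by rewrite ifT ?EFinB // ltBSide /= lteifE ab ltW.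
Qed.

Lemma emeasurable_fun_nonincreasing (D : set R) (F : R -> \bar R) :
  measurable D -> (forall x y, D x -> D y -> (x <= y)%R -> F y <= F x) ->
  measurable_fun D F.
Proof.
move=> mD Fni; apply: (measurability _ (ErealGenOInfty.measurableE R)) => //.
move=> /= _ [_ [r ->] <-]; rewrite preimage_itvoy.
(* A superlevel set of F is D met with its own down-closure, an interval. *)
have -> : D `&` [set x | r%:E < F x] =
    D `&` [set x | exists y, [/\ D y, r%:E < F y & (x <= y)%R]].
  apply/seteqP; split => x /= [Dx Fx]; split => //; first by exists x.
  by case: Fx => y [Dy Fy xy]; exact: lt_le_trans Fy (Fni _ _ Dx Dy xy).
apply: measurableI => //; apply: is_interval_measurable.
by move=> x y _ [w [Dw Fw yw]] z /andP[_ zy]; exists w; split => //; exact: le_trans yw.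
Qed.

End lebesgue_measure_real_line.

Section rearrangement_maximal_function.
Variable R : realType.
Local Notation mu := (@lebesgue_measure R).
Implicit Types (f g : R -> \bar R).

Lemma rearr_ge0 f t : 0 <= rearr f t.
Proof. by apply: le_ereal_inf_tmp => _ [s [s0 _] <-]; rewrite lee_fin. Qed.

Lemma rearr_le f s t : (s <= t)%R -> rearr f t <= rearr f s.
Proof.
move=> st; apply: ereal_inf_le_tmp => _ [r [r0 fr] <-].
by exists r => //; split => //; apply: le_trans fr _; rewrite lee_fin.
Qed.

Lemma measurable_rearr f (D : set R) : measurable D -> measurable_fun D (rearr f).
Proof.
by move=> mD; apply: emeasurable_fun_nonincreasing => // s t _ _; exact: rearr_le.
Qed.

Lemma rearr_le_nonincreasing g u :
  (forall x y, (0 < x < 1)%R -> (0 < y < 1)%R -> (x <= y)%R -> g y <= g x) ->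
  (0 < u < 1)%R -> 0 <= g u -> rearr g u <= g u.
Proof.
move=> gni u01 gu0; have /andP[u0 _] := u01.
have [->|gufin] := eqVneq (g u) +oo; first exact: leey.
have gu : g u \is a fin_num by rewrite ge0_fin_numE // ltey.
rewrite -(fineK gu); apply: ereal_inf_lbound; exists (fine (g u)) => //; split.
  by rewrite -lee_fin fineK.
have mg : measurable_fun (`]0%R, 1%R[ : set R) g.
  by apply: emeasurable_fun_nonincreasing => // x y; rewrite /= !in_itv; exact: gni.
have sub : `]0%R, 1%R[ `&` [set x | (fine (g u))%:E < g x] `<=` `]0%R, u[.
  move=> x [/=]; rewrite !in_itv /= fineK // => x01 gx.
  have /andP[x0 _] := x01; rewrite x0 ltNge; apply/negP => ux.
  by move: gx; rewrite ltNge gni.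
have mS : measurable (`]0%R, 1%R[ `&` [set x | (fine (g u))%:E < g x] : set R).
  exact: emeasurable_fun_o_infty.
rewrite /distrib; apply: (@le_trans _ _ (mu `]0%R, u[)).
  by apply: le_measure; rewrite ?inE.
by rewrite lebesgue_measure_itv_le ?subr0 // ltW.
Qed.

Lemma rearr_ge g (c : \bar R) s x : (0 <= s)%R -> (s < x)%R -> (x <= 1)%R ->
  measurable_fun (`]0%R, 1%R[ : set R) g -> (forall z, (0 < z < x)%R -> c <= g z) ->
  c <= rearr g s.
Proof.
move=> s0 sx x1 mg cg; apply: le_ereal_inf_tmp => _ [r [r0 gr] <-].
rewrite leNgt; apply/negP => rc.
have sub : `]0%R, x[ `<=` `]0%R, 1%R[ `&` [set z | r%:E < g z].
  move=> z /=; rewrite !in_itv /= => z0x; have /andP[z0 zx] := z0x; split.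
    by rewrite z0 (lt_le_trans zx x1).
  exact: lt_le_trans rc (cg _ z0x).
have mS : measurable (`]0%R, 1%R[ `&` [set z | r%:E < g z] : set R).
  exact: emeasurable_fun_o_infty.
have : mu `]0%R, x[ <= distrib g r by apply: le_measure; rewrite ?inE.
rewrite lebesgue_measure_itv_le ?subr0; last exact: ltW (le_lt_trans s0 sx).
by move=> /le_trans /(_ gr); rewrite lee_fin leNgt sx.
Qed.

Lemma mul_rearr_le_integral f (x y : bool) (a b : R) : (a <= b)%R ->
  (b - a)%:E * rearr f b <=
  \int[mu]_(s in [set` Interval (BSide x a) (BSide y b)]) rearr f s.
Proof.
move=> ab; rewrite muleC -(lebesgue_measure_itv_le x y ab).
apply: integral_ge_lb => //; [exact: measurable_rearr | exact: rearr_ge0 |].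
by move=> s /=; rewrite in_itv /= => /andP[_ /lteifW]; exact: rearr_le.
Qed.

Lemma integral_rearr_le_mul f (x y : bool) (a b : R) : (a <= b)%R ->
  \int[mu]_(s in [set` Interval (BSide x a) (BSide y b)]) rearr f s <=
  rearr f a * (b - a)%:E.
Proof.
move=> ab; rewrite -(lebesgue_measure_itv_le x y ab).
apply: integral_le_ub => //; [exact: measurable_rearr | by move=> *; exact: rearr_ge0 |].
by move=> s /=; rewrite in_itv /= => /andP[/lteifW + _]; exact: rearr_le.
Qed.

Lemma integral_rearr_ge0 f t : 0 <= \int[mu]_(s in `]0%R, t[) rearr f s.
Proof. by apply: integral_ge0 => s _; exact: rearr_ge0. Qed.

Lemma maxfun_ge0 f t : (0 <= t)%R -> 0 <= maxfun f t.
Proof. by move=> t0; rewrite mule_ge0 ?integral_rearr_ge0 // lee_fin invr_ge0. Qed.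

Lemma rearr_le_maxfun f t : (0 < t)%R -> rearr f t <= maxfun f t.
Proof.
move=> t0; rewrite /maxfun -[leLHS]mul1e -(@divff _ t) ?gt_eqF // mulrC EFinM -muleA.
apply: lee_wpmul2l; first by rewrite lee_fin invr_ge0 ltW.
by have := mul_rearr_le_integral f false true (ltW t0); rewrite subr0.
Qed.

Lemma maxfun_le f s t : (0 < s)%R -> (s <= t)%R -> maxfun f t <= maxfun f s.
Proof.
move=> s0 st; have t0 := lt_le_trans s0 st.
set A := \int[mu]_(x in `]0%R, s[) rearr f x.
have int0t : \int[mu]_(x in `]0%R, t[) rearr f x =
    A + \int[mu]_(x in `[s, t[) rearr f x.
  rewrite (@itv_bndbnd_setU _ _ _ (BLeft s)) ?bnd_simp //.
  rewrite ge0_integral_setU //; first by apply: measurable_rearr; exact: measurableU.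
    by move=> x _; exact: rearr_ge0.
  apply/disj_setPS => x [/=]; rewrite !in_itv /= => /andP[_ xs] /andP[].
  by rewrite leNgt xs.
have tail : \int[mu]_(x in `[s, t[) rearr f x <= ((t - s) / s)%:E * A.
  apply: le_trans (integral_rearr_le_mul f true true st) _.
  rewrite muleC EFinM -muleA; apply: lee_wpmul2l; first by rewrite lee_fin subr_ge0.
  exact: rearr_le_maxfun.
rewrite /maxfun int0t -/A; apply: le_trans (lee_wpmul2l _ (leeD2l A tail)) _.
  by rewrite lee_fin invr_ge0 ltW.
have -> : A + ((t - s) / s)%:E * A = (t / s)%:E * A.
  rewrite -[X in X + _]mul1e -ge0_muleDl ?lee_fin ?divr_ge0 ?subr_ge0 ?(ltW s0) //.
  by congr (_ * _); rewrite -EFinD; congr EFin; field; rewrite gt_eqF.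
by rewrite muleA -EFinM mulrA mulVf ?gt_eqF // mul1r.
Qed.

Lemma maxfun_ge_ratio f s t : (0 < s)%R -> (s <= t)%R ->
  (s / t)%:E * maxfun f s <= maxfun f t.
Proof.
move=> s0 st; have t0 := lt_le_trans s0 st.
rewrite /maxfun muleA -EFinM mulrAC divff ?gt_eqF // mul1r.
apply: lee_wpmul2l; first by rewrite lee_fin invr_ge0 ltW.
apply: ge0_subset_integral => //; first exact: measurable_rearr.
  by move=> *; exact: rearr_ge0.
by apply: subset_itvl; rewrite bnd_simp.
Qed.

Lemma maxfun_le_rearr_maxfun f s : (0 < s < 1)%R ->
  maxfun f s <= 2%:E * rearr (maxfun f) s.
Proof.
(* f^** >= f^**(s) / 2 on ]0, min(2s, 1)[, an interval longer than s. *)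
move=> /andP[s0 s1].
have -> : maxfun f s = 2%:E * ((2^-1)%:E * maxfun f s).
  by rewrite muleA -EFinM divff // mul1e.
apply: lee_wpmul2l; first by rewrite lee_fin.
apply: (@rearr_ge _ _ s (Num.min (2 * s) 1)%R); first exact: ltW.
- by rewrite lt_min s1 andbT; lra.
- by rewrite ge_min lexx orbT.
- apply: emeasurable_fun_nonincreasing => // x y.
  by rewrite /= !in_itv /= => /andP[x0 _] _; exact: maxfun_le.
move=> z /andP[z0]; rewrite lt_min => /andP[z2s _].
have [zs|sz] := leP z s.
  apply: le_trans (maxfun_le f z0 zs); rewrite -[leRHS]mul1e.
  by apply: lee_wpmul2r; [exact/maxfun_ge0/ltW | rewrite lee_fin; lra].
apply: le_trans (maxfun_ge_ratio f s0 (ltW sz)).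
apply: lee_wpmul2r; first exact/maxfun_ge0/ltW.
by rewrite lee_fin ler_pdivlMr ?(lt_trans s0) //; lra.
Qed.

End rearrangement_maximal_function.

Section dyadic_points.
Variable R : realType.
Local Open Scope ring_scope.
Implicit Types t s : R.

Definition dyadic t (n : nat) := t / 2 ^+ n.

Lemma dyadic0 t : dyadic t 0 = t.
Proof. by rewrite /dyadic expr0 divr1. Qed.

Lemma dyadicS t n : dyadic t n.+1 = dyadic t n / 2.
Proof. by rewrite /dyadic exprSr invfM mulrA. Qed.

Lemma dyadic_gt0 t n : 0 < t -> 0 < dyadic t n.
Proof. by move=> t0; rewrite divr_gt0 // exprn_gt0. Qed.

Lemma dyadic_le t n m : 0 <= t -> (n <= m)%N -> dyadic t m <= dyadic t n.
Proof.
move=> t0 nm; rewrite /dyadic ler_wpM2l // lef_pV2 ?posrE ?exprn_gt0 //.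
by rewrite ler_weXn2l ?ler1n.
Qed.

Lemma dyadic_le_id t n : 0 <= t -> dyadic t n <= t.
Proof. by move=> t0; rewrite -[leRHS](dyadic0 t) dyadic_le. Qed.

Lemma dyadic_in01 t n : 0 < t < 1 -> 0 < dyadic t n < 1.
Proof.
move=> /andP[t0 t1]; rewrite dyadic_gt0 //.
exact: le_lt_trans (dyadic_le_id n (ltW t0)) t1.
Qed.

Lemma exists_dyadic_block t s : 0 < s < t ->
  exists j, dyadic t j.+1 <= s < dyadic t j.
Proof.
move=> /andP[s0 st].
have ex_n : exists n, dyadic t n <= s.
  exists (Num.Def.archi_bound (t / s)); set n := Num.Def.archi_bound _.
  have ts_n : t / s < n%:R.
    by apply: archi_boundP; rewrite divr_ge0 // ltW // (lt_trans s0 st).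
  have n_2n : (n%:R : R) <= 2 ^+ n by rewrite -natrX ler_nat ltnW // ltn_expl.
  rewrite /dyadic ler_pdivrMr ?exprn_gt0 // mulrC -ler_pdivrMr //.
  exact/ltW/(lt_le_trans ts_n n_2n).
case: (ex_minnP ex_n) => -[|j] tj_s min_j.
  by move: tj_s; rewrite dyadic0 leNgt st.
by exists j; rewrite tj_s ltNge; apply/negP => /min_j; rewrite ltnn.
Qed.

Lemma sum_integral_dyadic_blocks (f : R -> \bar R) t : 0 < t ->
  (\sum_(j <oo) \int[lebesgue_measure]_(u in `[dyadic t j.+2, dyadic t j.+1[)
     rearr f u <= \int[lebesgue_measure]_(u in `]0%R, t[) rearr f u)%E.
Proof.
move=> t0; set B := fun j => `[dyadic t j.+2, dyadic t j.+1[%classic.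
have mB j : measurable (B j) by exact: measurable_itv.
have tB : trivIset [set: nat] B.
  move=> i k _ _ [x []]; rewrite /B /= !in_itv /= => /andP[ix xi] /andP[kx xk].
  have sep m n : (m < n)%N -> dyadic t m.+2 <= x -> x < dyadic t n.+1 -> False.
    move=> mn mx xn.
    have nm : dyadic t n.+1 <= dyadic t m.+2.
      exact: dyadic_le (ltW t0) (mn : (m.+2 <= n.+1)%N).
    by have := lt_le_trans xn (le_trans nm mx); rewrite ltxx.
  case: (ltngtP i k) => // [ik|ki]; first by case: (sep i k ik ix xk).
  by case: (sep k i ki kx xi).
rewrite -ge0_integral_bigcup //; last 2 first.
- by apply: measurable_rearr; exact: bigcupT_measurable.
- by move=> x _; exact: rearr_ge0.
apply: ge0_subset_integral => //; first exact: bigcupT_measurable.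
- exact: measurable_rearr.
- by move=> x _; exact: rearr_ge0.
move=> x [k _]; rewrite /B /= !in_itv /= => /andP[kx xk].
rewrite (lt_le_trans (dyadic_gt0 k.+2 t0) kx) /=.
exact: lt_le_trans xk (dyadic_le_id k.+1 (ltW t0)).
Qed.

End dyadic_points.

Section TI_estimates.
Variables (R : realType) (I : R -> R) (C : R).
Local Notation mu := (@lebesgue_measure R).
Hypothesis I_gt0 : forall x, (0 < x < 1)%R -> (0 < I x)%R.
Hypothesis I_le : forall x y, (0 < x < 1)%R -> (0 < y < 1)%R -> (x <= y)%R ->
  (I x <= I y)%R.
Hypothesis I_div_le : forall x y, (0 < x < 1)%R -> (0 < y < 1)%R -> (x <= y)%R ->
  (I y / y <= I x / x)%R.
Hypothesis C_ge0 : (0 <= C)%R.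
Hypothesis integral_I_div : forall t, (0 < t < 1)%R ->
  \int[mu]_(s in `]0%R, t[) (I s / s)%:E <= (C * I t)%:E.
Implicit Types f : R -> \bar R.

Definition Iquot (u : R) : \bar R := (I u / u)%:E.

Definition tail_sup f u :=
  ereal_sup [set (s / I s)%:E * rearr f s | s in `[u, 1%R[].

Lemma TIE f u : TI I f u = Iquot u * tail_sup f u.
Proof. by []. Qed.

Lemma I_double_le x : (0 < x)%R -> (2 * x < 1)%R -> (I (2 * x) <= 2 * I x)%R.
Proof.
move=> x0 x1; have x01 : (0 < x < 1)%R by rewrite x0 /=; lra.
have x201 : (0 < 2 * x < 1)%R by rewrite x1 andbT mulr_gt0.
have x2x : (x <= 2 * x)%R by lra.
have := I_div_le x01 x201 x2x.
rewrite ler_pdivrMr ?mulr_gt0 //.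
by have -> : (I x / x * (2 * x) = 2 * I x)%R by field; rewrite gt_eqF.
Qed.

Lemma Iquot_ge0 u : (0 < u < 1)%R -> 0 <= Iquot u.
Proof.
by move=> u01; rewrite lee_fin divr_ge0 // ltW ?I_gt0 //; case/andP: u01.
Qed.

Lemma Iquot_le u v : (0 < u < 1)%R -> (0 < v < 1)%R -> (u <= v)%R ->
  Iquot v <= Iquot u.
Proof. by move=> u01 v01 uv; rewrite lee_fin I_div_le. Qed.

Lemma measurable_Iquot (D : set R) : measurable D -> D `<=` `]0%R, 1%R[ ->
  measurable_fun D Iquot.
Proof.
move=> mD sD; apply: emeasurable_fun_nonincreasing => // x y /sD + /sD.
by rewrite /= !in_itv /=; exact: Iquot_le.
Qed.

Lemma tail_sup_ge0 f u : (0 < u < 1)%R -> 0 <= tail_sup f u.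
Proof.
move=> u01; have /andP[u0 u1] := u01.
apply: le_trans (ereal_sup_ubound _); last by exists u => //=; rewrite in_itv /= lexx u1.
by rewrite mule_ge0 ?rearr_ge0 // lee_fin divr_ge0 // ltW // I_gt0.
Qed.

Lemma tail_sup_le f u v : (u <= v)%R -> tail_sup f v <= tail_sup f u.
Proof.
move=> uv; apply: ereal_sup_le => _ [s /= + <-]; rewrite in_itv /= => /andP[vs s1].
by exists s => //=; rewrite in_itv /= s1 (le_trans uv).
Qed.

Lemma TI_ge0 f u : (0 < u < 1)%R -> 0 <= TI I f u.
Proof. by move=> u01; rewrite TIE mule_ge0 ?Iquot_ge0 ?tail_sup_ge0. Qed.

Lemma TI_le f u v : (0 < u < 1)%R -> (0 < v < 1)%R -> (u <= v)%R ->
  TI I f v <= TI I f u.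
Proof.
move=> u01 v01 uv; rewrite !TIE.
apply: lee_pmul; [exact: Iquot_ge0 | exact: tail_sup_ge0 | exact: Iquot_le |].
exact: tail_sup_le.
Qed.

Lemma measurable_TI f (D : set R) : measurable D -> D `<=` `]0%R, 1%R[ ->
  measurable_fun D (TI I f).
Proof.
move=> mD sD; apply: emeasurable_fun_nonincreasing => // x y /sD + /sD.
by rewrite /= !in_itv /=; exact: TI_le.
Qed.

Lemma rearr_TI_le f u : (0 < u < 1)%R -> rearr (TI I f) u <= TI I f u.
Proof.
move=> u01; apply: rearr_le_nonincreasing u01 (TI_ge0 f u01) => x y.
exact: TI_le.
Qed.

Definition dyadic_term f t j :=
  (dyadic t j / I (dyadic t j.+1))%:E * rearr f (dyadic t j.+1).

Lemma dyadic_term_ge0 f t j : (0 < t < 1)%R -> 0 <= dyadic_term f t j.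
Proof.
move=> t01; have /andP[tj0 _] := dyadic_in01 j t01.
by rewrite mule_ge0 ?rearr_ge0 // lee_fin divr_ge0 // ltW // I_gt0 // dyadic_in01.
Qed.

Lemma weighted_rearr_le_dyadic_term f t j s : (0 < t < 1)%R ->
  (dyadic t j.+1 <= s < dyadic t j)%R -> (s / I s)%:E * rearr f s <= dyadic_term f t j.
Proof.
move=> t01 /andP[js sj]; have a01 := dyadic_in01 j.+1 t01.
have /andP[a0 _] := a01; have /andP[_ tj1] := dyadic_in01 j t01.
have s0 := lt_le_trans a0 js.
have s01 : (0 < s < 1)%R by rewrite s0 (lt_trans sj tj1).
apply: lee_pmul; last exact: rearr_le.
- by rewrite lee_fin divr_ge0 // ltW // I_gt0.
- exact: rearr_ge0.
rewrite lee_fin; apply: ler_pM; [exact: ltW | | exact: ltW |].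
  by rewrite invr_ge0 ltW // I_gt0.
by rewrite lef_pV2 ?posrE ?I_gt0 //; exact: I_le.
Qed.

Lemma tail_sup_le_dyadic f t u : (0 < t < 1)%R -> (0 < u)%R ->
  tail_sup f u <= tail_sup f t +
    \sum_(j <oo) (if (u < dyadic t j)%R then dyadic_term f t j else 0).
Proof.
move=> t01 u0.
have e_ge0 j : 0 <= (if (u < dyadic t j)%R then dyadic_term f t j else 0).
  by case: ifP => // _; exact: dyadic_term_ge0.
apply: ge_ereal_sup => _ [s /= + <-]; rewrite in_itv /= => /andP[us s1].
have s0 := lt_le_trans u0 us.
have [ts|st] := leP t s.
  apply: (le_trans _ (leeDl _ (nneseries_ge0 (fun j _ _ => e_ge0 j)))).
  by apply: ereal_sup_ubound; exists s => //=; rewrite in_itv /= ts s1.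
have s0t : (0 < s < t)%R by rewrite s0 st.
have [j /andP[js sj]] := exists_dyadic_block s0t.
apply: (le_trans _ (leeDr _ (tail_sup_ge0 f t01))).
rewrite (nneseriesD1 (n := j)) //.
apply: (le_trans _ (leeDl _ (nneseries_ge0 (fun k _ _ => e_ge0 k)))).
by rewrite (le_lt_trans us sj); apply: weighted_rearr_le_dyadic_term; rewrite ?js.
Qed.

Definition dyadic_piece f t j u :=
  dyadic_term f t j * (Iquot \_ `]-oo, dyadic t j[) u.

Lemma dyadic_piece_ge0 f t j u : (0 < t < 1)%R -> (0 < u < 1)%R ->
  0 <= dyadic_piece f t j u.
Proof.
move=> t01 u01; rewrite mule_ge0 ?dyadic_term_ge0 // /patch.
by case: ifP => // _; exact: Iquot_ge0.
Qed.

Lemma TI_le_dyadic f t u : (0 < t < 1)%R -> (0 < u < 1)%R ->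
  TI I f u <= Iquot u * tail_sup f t + \sum_(j <oo) dyadic_piece f t j u.
Proof.
move=> t01 u01; have /andP[u0 _] := u01.
have e_ge0 j : 0 <= (if (u < dyadic t j)%R then dyadic_term f t j else 0).
  by case: ifP => // _; exact: dyadic_term_ge0.
have := lee_wpmul2l (Iquot_ge0 u01) (tail_sup_le_dyadic f t01 u0).
rewrite -TIE => /le_trans; apply.
rewrite ge0_muleDr ?tail_sup_ge0 ?nneseries_ge0 //.
rewrite /Iquot -nneseriesZl //; apply: leeD2l; apply: lee_nneseries => [j _ _|j _].
  by rewrite mule_ge0 // -/(Iquot u) Iquot_ge0.
rewrite /dyadic_piece /patch mem_setE in_itv /=.
by case: ifP => _; rewrite ?mule0 // muleC.
Qed.

Lemma integral_dyadic_piece f t j : (0 < t < 1)%R ->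
  \int[mu]_(u in `]0%R, t[) dyadic_piece f t j u <=
  dyadic_term f t j * (C * I (dyadic t j))%:E.
Proof.
move=> t01; have /andP[t0 t1] := t01.
have sub : `]0%R, t[ `<=` `]0%R, 1%R[ by apply: subset_itvl; rewrite bnd_simp ltW.
rewrite ge0_integralZl //; last exact: dyadic_term_ge0.
- apply: lee_wpmul2l; first exact: dyadic_term_ge0.
  rewrite -integral_mkcondr.
  have -> : `]0%R, t[ `&` `]-oo, dyadic t j[ = `]0%R, dyadic t j[%classic :> set R.
    apply/seteqP; split => x /=; rewrite !in_itv /=; first by case=> /andP[-> _] ->.
    move=> /andP[-> xj]; split => //.
    exact: lt_le_trans xj (dyadic_le_id j (ltW t0)).
  exact: integral_I_div (dyadic_in01 j t01).
- apply/measurable_restrict => //; apply: measurable_Iquot; first exact: measurableI.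
  by move=> x [/sub].
- by move=> u /sub u01; rewrite /patch; case: ifP => // _; exact: Iquot_ge0.
Qed.

Lemma dyadic_term_le_integral f t j : (0 < t < 1)%R ->
  dyadic_term f t j * (C * I (dyadic t j))%:E <=
  (8 * C)%:E * \int[mu]_(u in `[dyadic t j.+2, dyadic t j.+1[) rearr f u.
Proof.
move=> t01; set a := dyadic t j.+1.
have a01 : (0 < a < 1)%R := dyadic_in01 j.+1 t01.
have /andP[a0 _] := a01; have Ia0 := I_gt0 a01.
have ta : dyadic t j = (2 * a)%R by rewrite /a dyadicS; field.
have I2a : (I (2 * a) <= 2 * I a)%R.
  by apply: I_double_le => //; rewrite -ta; case/andP: (dyadic_in01 j t01).
have aa : (a / 2 <= a)%R by lra.
rewrite /dyadic_term -/a ta [dyadic t j.+2]dyadicS -/a.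
apply: le_trans _ (lee_wpmul2l _ (mul_rearr_le_integral f true true aa)); last first.
  by rewrite lee_fin mulr_ge0.
rewrite muleAC -EFinM muleA -EFinM; apply: lee_wpmul2r; first exact: rearr_ge0.
have Ka : (0 <= 2 * a / I a)%R by rewrite divr_ge0 // ltW // mulr_gt0.
rewrite lee_fin; apply: le_trans (ler_wpM2l Ka (ler_wpM2l C_ge0 I2a)) _.
by have -> : (2 * a / I a * (C * (2 * I a)) = 8 * C * (a - a / 2))%R
  by field; rewrite gt_eqF.
Qed.

Lemma integral_TI_le f t : (0 < t < 1)%R ->
  \int[mu]_(u in `]0%R, t[) TI I f u <=
  (C * I t)%:E * tail_sup f t + (8 * C)%:E * \int[mu]_(u in `]0%R, t[) rearr f u.
Proof.
move=> t01; have /andP[t0 t1] := t01.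
have sub : `]0%R, t[ `<=` `]0%R, 1%R[ by apply: subset_itvl; rewrite bnd_simp ltW.
have mIquot : measurable_fun `]0%R, t[ Iquot by exact: measurable_Iquot.
have Iquot_nneg u : `]0%R, t[%classic u -> 0 <= Iquot u by move=> /sub; exact: Iquot_ge0.
have piece_ge0 j u : `]0%R, t[%classic u -> 0 <= dyadic_piece f t j u.
  by move=> /sub; exact: dyadic_piece_ge0.
have mpiece j : measurable_fun `]0%R, t[ (dyadic_piece f t j).
  apply: emeasurable_funM; first exact: measurable_cst.
  apply/measurable_restrict => //; apply: measurable_Iquot; first exact: measurableI.
  by move=> x [/sub].
have m1 : measurable_fun `]0%R, t[ (fun u => Iquot u * tail_sup f t).
  exact: emeasurable_funM mIquot (measurable_cst _).
have msum : measurable_fun `]0%R, t[ (fun u => \sum_(j <oo) dyadic_piece f t j u).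
  by apply: ge0_emeasurable_sum => [j u Du _|j _]; [exact: piece_ge0 | exact: mpiece].
apply: (@le_trans _ _ (\int[mu]_(u in `]0%R, t[)
    (Iquot u * tail_sup f t + \sum_(j <oo) dyadic_piece f t j u))).
  apply: ge0_le_integral => //.
  - by move=> u /sub; exact: TI_ge0.
  - exact: measurable_TI.
  - exact: emeasurable_funD.
  - by move=> u /sub; exact: TI_le_dyadic.
rewrite ge0_integralD //; first last.
- by move=> u Du; apply: nneseries_ge0 => j _ _; exact: piece_ge0.
- by move=> u Du; rewrite mule_ge0 ?Iquot_nneg ?tail_sup_ge0.
rewrite ge0_integralZr ?tail_sup_ge0 // integral_nneseries //.
apply: leeD.
  by apply: lee_wpmul2r; [exact: tail_sup_ge0 | exact: integral_I_div].
apply: (@le_trans _ _ (\sum_(j <oo) ((8 * C)%:E *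
    \int[mu]_(u in `[dyadic t j.+2, dyadic t j.+1[) rearr f u))).
  apply: lee_nneseries => [j _ _|j _].
    by apply: integral_ge0 => u; exact: piece_ge0.
  exact: le_trans (integral_dyadic_piece f j t01) (dyadic_term_le_integral f j t01).
rewrite nneseriesZl; last by move=> j _; apply: integral_ge0 => u _; exact: rearr_ge0.
by apply: lee_wpmul2l; [rewrite lee_fin mulr_ge0 | exact: sum_integral_dyadic_blocks].
Qed.

Lemma tail_sup_le_maxfun f t : (0 < t < 1)%R ->
  tail_sup f t <= 2%:E * tail_sup (maxfun f) t.
Proof.
move=> /andP[t0 _]; apply: ge_ereal_sup => _ [s /= + <-].
rewrite in_itv /= => /andP[ts s1]; have s0 := lt_le_trans t0 ts.
have s01 : (0 < s < 1)%R by rewrite s0 s1.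
have w0 : 0 <= (s / I s)%:E by rewrite lee_fin divr_ge0 // ltW // I_gt0.
apply: le_trans (lee_wpmul2l w0 (le_trans (rearr_le_maxfun f s0)
  (maxfun_le_rearr_maxfun f s01))) _.
rewrite muleCA; apply: lee_wpmul2l => //; apply: ereal_sup_ubound.
by exists s => //=; rewrite in_itv /= ts s1.
Qed.

Lemma maxfun_le_TI_maxfun f t : (0 < t < 1)%R -> maxfun f t <= 2%:E * TI I (maxfun f) t.
Proof.
move=> t01; have /andP[t0 t1] := t01; have It0 := I_gt0 t01.
apply: le_trans (maxfun_le_rearr_maxfun f t01) _; apply: lee_wpmul2l => //.
rewrite TIE /Iquot -[leLHS]mul1e -(@divff _ (I t / t)) ?gt_eqF ?divr_gt0 //.
rewrite EFinM -muleA; apply: lee_wpmul2l; first by rewrite lee_fin divr_ge0 // ltW.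
apply: ereal_sup_ubound; exists t; first by rewrite /= in_itv /= lexx t1.
by rewrite invf_div.
Qed.

Lemma maxfun_TI_le f t : (0 < t < 1)%R ->
  maxfun (TI I f) t <= (18 * C)%:E * TI I (maxfun f) t.
Proof.
move=> t01; have /andP[t0 t1] := t01.
have sub : `]0%R, t[ `<=` `]0%R, 1%R[ by apply: subset_itvl; rewrite bnd_simp ltW.
set X := TI I (maxfun f) t; have X0 : 0 <= X := TI_ge0 _ t01.
have tV0 : 0 <= (t^-1)%:E by rewrite lee_fin invr_ge0 ltW.
have maxfun_TI : maxfun (TI I f) t <= (t^-1)%:E * \int[mu]_(u in `]0%R, t[) TI I f u.
  apply: lee_wpmul2l => //; apply: ge0_le_integral => //.
  - by move=> u _; exact: rearr_ge0.
  - exact: measurable_rearr.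
  - exact: measurable_TI.
  - by move=> u /sub; exact: rearr_TI_le.
apply: le_trans maxfun_TI (le_trans (lee_wpmul2l tV0 (integral_TI_le f t01)) _).
rewrite ge0_muleDr; first last.
- by rewrite mule_ge0 ?integral_rearr_ge0 // lee_fin mulr_ge0.
- by rewrite mule_ge0 ?tail_sup_ge0 // lee_fin mulr_ge0 // ltW // I_gt0.
have -> : (18 * C)%:E * X = (2 * C)%:E * X + (16 * C)%:E * X.
  by rewrite -ge0_muleDl ?lee_fin ?mulr_ge0 // -EFinD; congr (_%:E * _); lra.
apply: leeD.
  rewrite muleA -EFinM; apply: le_trans (lee_wpmul2l _ (tail_sup_le_maxfun f t01)) _.
    by rewrite lee_fin !mulr_ge0 // ?invr_ge0 ltW // I_gt0.
  rewrite muleCA muleA -EFinM /X TIE /Iquot muleA -EFinM.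
  apply: lee_wpmul2r; first exact: tail_sup_ge0.
  by rewrite lee_fin; have -> : (2 * (t^-1 * (C * I t)) = 2 * C * (I t / t))%R by ring.
rewrite muleCA -[X in (8 * C)%:E * X]/(maxfun f t).
apply: le_trans (lee_wpmul2l _ (maxfun_le_TI_maxfun f t01)) _.
  by rewrite lee_fin mulr_ge0.
by rewrite muleA -EFinM; apply: lee_wpmul2r => //; rewrite lee_fin; lra.
Qed.

End TI_estimates.

Theorem theorem3p12 (R : realType) (I : R -> R) :
  quasiconcave I ->
  (exists2 C : R, (0 < C)%R &
     forall t : R, (0 < t < 1)%R ->
       \int[@lebesgue_measure R]_(s in `]0%R, t[) (I s / s)%:E <= (C * I t)%:E) ->
  exists2 C : R, (0 < C)%R &
    forall f : R -> \bar R,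
      measurable_fun `](0%R : R), (1%R : R)[ f ->
      (forall x : R, (0 < x < 1)%R -> 0 <= f x) ->
      forall t : R, (0 < t < 1)%R ->
        maxfun (TI I f) t <= C%:E * TI I (maxfun f) t.
Proof.
move=> [I01 [_ [_ [I_le [_ [_ I_div_le]]]]]] [C C0 intI].
have I_gt0 x : (0 < x < 1)%R -> (0 < I x)%R by move=> /I01 /andP[].
exists (18 * C)%R; first by rewrite mulr_gt0.
move=> f _ _ t t01.
exact: (@maxfun_TI_le R I C I_gt0 I_le I_div_le (ltW C0) intI f t t01).
Qed.
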